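(* Let $X=X(s)$ be a strictly convex $C^{(3)}$ plane curve, parametrized by arclength, such that for some function $\lambda(s)$ and for all $s$ and all sufficiently small $h_1,h_2$ (with $X(s),X(s+h_1),X(s+h_2)$ distinct) we have $U(s,h_1,h_2)=\lambda(s)T(s,h_1,h_2)$. Fix a point $A\in X$ and choose Cartesian coordinates with $A$ at the origin and the $x$-axis equal to the tangent line of $X$ at $A$, so that near $A$ the curve $X$ is the graph of a non-negative strictly convex $C^{(3)}$ function $f$ with $f(0)=f'(0)=0$ and $f''(0)>0$. Then for all $t$ in some open interval around $0$, $$2f(t)^2f''(t)=f'(t)^2\bigl(tf'(t)-f(t)\bigr).$$
   Context: A simple convex plane curve is strictly convex if it is of class $C^{(3)}$ and has positive curvature with respect to the unit normal pointing to the convex side. For three distinct points $A=X(s)$, $A_i=X(s+h_i)$ ($i=1,2$) on $X$, let $\ell,\ell_1,\ell_2$ be the tangent lines of $X$ at $A,A_1,A_2$, and let $B=\ell_1\cap\ell_2$, $B_1=\ell\cap\ell_1$, $B_2=\ell\cap\ell_2$. Define $T(s,h_1,h_2)=|\triangle AA_1A_2|$ and $U(s,h_1,h_2)=|\triangle BB_1B_2|$ (areas). *)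

From Stdlib Require Import Reals ZArith.
From Coquelicot Require Import Coquelicot.
Open Scope R_scope.

Definition pt := (R * R)%type.

Definition padd (p q : pt) : pt := (fst p + fst q, snd p + snd q).
Definition psub (p q : pt) : pt := (fst p - fst q, snd p - snd q).
Definition pscal (a : R) (p : pt) : pt := (a * fst p, a * snd p).
Definition det (u v : pt) : R := fst u * snd v - snd u * fst v.

Definition tri_area (P Q S : pt) : R := Rabs (det (psub Q P) (psub S P)) / 2.

(* intersection point of the lines P + R u and Q + R v (meaningful when
   det u v <> 0) *)
Definition line_inter (P u Q v : pt) : pt :=
  padd P (pscal (det (psub Q P) v / det u v) u).

Definition C3 (g : R -> R) : Prop :=
  forall x, ex_derive_n g 1 x /\ ex_derive_n g 2 x /\ ex_derive_n g 3 x /\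
            continuous (Derive_n g 3) x.

Definition C3_on (a b : R) (g : R -> R) : Prop :=
  forall x, a < x < b ->
    ex_derive_n g 1 x /\ ex_derive_n g 2 x /\ ex_derive_n g 3 x /\
    continuous (Derive_n g 3) x.

Definition strictly_convex_fun_on (a b : R) (g : R -> R) : Prop :=
  forall x y l, a < x < b -> a < y < b -> x <> y -> 0 < l < 1 ->
    g (l * x + (1 - l) * y) < l * g x + (1 - l) * g y.

Definition dX (X : R -> pt) (s : R) : pt :=
  (Derive (fun u => fst (X u)) s, Derive (fun u => snd (X u)) s).
Definition ddX (X : R -> pt) (s : R) : pt :=
  (Derive_n (fun u => fst (X u)) 2 s, Derive_n (fun u => snd (X u)) 2 s).

(* signed curvature (for a unit speed curve) *)
Definition curvature (X : R -> pt) (s : R) : R := det (dX X s) (ddX X s).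

Definition C3_curve (X : R -> pt) : Prop :=
  C3 (fun u => fst (X u)) /\ C3 (fun u => snd (X u)).

Definition arclength_param (X : R -> pt) : Prop :=
  forall s, (fst (dX X s)) ^ 2 + (snd (dX X s)) ^ 2 = 1.

(* simple: either an injective (open) curve, or a closed curve given by an
   L-periodic parametrization that is injective on each period *)
Definition simple_curve (X : R -> pt) : Prop :=
  (forall s u, X s = X u -> s = u) \/
  (exists L, 0 < L /\ (forall s, X (s + L) = X s) /\
     (forall s u, X s = X u -> exists k : Z, u = s + IZR k * L)).

(* strictly convex curve: simple, C^3, convex (the whole curve lies on one
   side of each of its tangent lines, the side of the normal sigma*J X'),
   with positive curvature with respect to the normal pointing to the convex
   side (i.e. sigma * signed curvature > 0). *)
Definition strictly_convex_curve (X : R -> pt) : Prop :=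
  C3_curve X /\ simple_curve X /\
  exists sigma : R, (sigma = 1 \/ sigma = -1) /\
    (forall s, 0 < sigma * curvature X s) /\
    (forall s u, 0 <= sigma * det (dX X s) (psub (X u) (X s))).

Definition Tarea (X : R -> pt) (s h1 h2 : R) : R :=
  tri_area (X s) (X (s + h1)) (X (s + h2)).

Definition Uarea (X : R -> pt) (s h1 h2 : R) : R :=
  let A := X s in let A1 := X (s + h1) in let A2 := X (s + h2) in
  let t := dX X s in let t1 := dX X (s + h1) in let t2 := dX X (s + h2) in
  let B := line_inter A1 t1 A2 t2 in
  let B1 := line_inter A t A1 t1 in
  let B2 := line_inter A t A2 t2 in
  tri_area B B1 B2.

(* Cartesian coordinate change: origin at A, axes rotated by theta, and
   possibly reflected (eps = +-1): covers all orthonormal frames *)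
Definition coord (A : pt) (theta eps : R) (p : pt) : pt :=
  let dx := fst p - fst A in let dy := snd p - snd A in
  (cos theta * dx + sin theta * dy, eps * (- sin theta * dx + cos theta * dy)).

(* In the adapted frame the curve near [A] is the graph of [f], and by the support property
   the tangent direction at [(t, f t)] is proportional to [(1, f' t)].  The two triangles are
   then explicit: [2 T = |x f(y) - y f(x)|] and [2 U = |b(x,y)| |g(y) - g(x)|], where
   [g(t) = t - f(t)/f'(t)] is the abscissa at which the tangent at [t] meets the [x]-axis and
   [b(x,y)] is the height of the intersection of the tangents at [x] and [y], which tends to
   [f(x)] as [y -> x].  Dividing [U = lambda T] by [y - x] and letting [y -> x] gives
   [lambda (x f' - f) f'^2 = f^2 f''].  Dividing this by [x^4] and letting [x -> 0], where
   [f'(x)/x -> f''(0)] and [f(x)/x^2 -> f''(0)/2], forces [lambda = 1/2]. *)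

From Stdlib Require Import Reals Lra Psatz.
From Coquelicot Require Import Coquelicot.
Open Scope R_scope.

Lemma is_lim_diff_quot (h : R -> R) x l :
  derivable_pt_lim h x l -> is_lim (fun y => (h y - h x) / (y - x)) x l.
Proof.
  intros Hd. apply is_lim_Reals. intros e He.
  destruct (Hd e He) as [d Hd'].
  exists d; split; [apply cond_pos |].
  intros y [Hyx Hy]. unfold dist in *; simpl in *; unfold R_dist in *.
  specialize (Hd' (y - x) ltac:(lra) Hy).
  replace (x + (y - x)) with y in Hd' by ring. exact Hd'.
Qed.

Lemma is_lim_eq_loc (F G : R -> R) a (l1 l2 : R) d : 0 < d ->
  (forall y, y <> a -> Rabs (y - a) < d -> F y = G y) ->
  is_lim F a l1 -> is_lim G a l2 -> l1 = l2.
Proof.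
  intros Hd E HF HG.
  assert (HG1 : is_lim G a l1).
  { apply (is_lim_ext_loc F); [| exact HF].
    exists (mkposreal d Hd). intros y Hy Hya. now apply E. }
  apply is_lim_unique in HG1. apply is_lim_unique in HG.
  rewrite HG in HG1. now injection HG1.
Qed.

Lemma Rabs_le_between0 x t : Rmin 0 x <= t <= Rmax 0 x -> Rabs t <= Rabs x.
Proof.
  unfold Rmin, Rmax. intros Ht. destruct (Rle_dec 0 x).
  - rewrite !Rabs_right; lra.
  - rewrite !Rabs_left1; lra.
Qed.

Lemma is_lim_div_sqr (f : R -> R) (rho c : R) : 0 < rho -> f 0 = 0 -> Derive f 0 = 0 ->
  (forall x, Rabs x < rho -> derivable_pt_lim f x (Derive f x)) ->
  is_lim (fun x => Derive f x / x) 0 c -> is_lim (fun x => f x / x ^ 2) 0 (c / 2).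
Proof.
  intros Hrho Hf0 Hf'0 Hd HL. apply is_lim_Reals. apply (is_lim_Reals _ 0 c) in HL.
  intros e He. destruct (HL e He) as [d [Hdpos HL']].
  exists (Rmin d rho). split; [apply Rmin_glb_lt; lra |].
  intros x [Hx0 Hx]. change (Rabs (x - 0) < Rmin d rho) in Hx.
  change (Rabs (f x / x ^ 2 - c / 2) < e). rewrite Rminus_0_r in Hx.
  pose proof (Rmin_l d rho). pose proof (Rmin_r d rho).
  assert (Hx2 : 0 < x ^ 2) by (apply pow2_gt_0, Hx0).
  set (h := fun t => f t - c / 2 * t ^ 2).
  destruct (MVT_abs h (fun t => Derive f t - c * t) 0 x) as [xi [Hxi Hxi_in]].
  { intros t Ht. pose proof (Rabs_le_between0 x t Ht).
    apply is_derive_Reals. unfold h. auto_derive.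
    - exists (Derive f t). apply is_derive_Reals, Hd. lra.
    - change (fun u => f u) with f. field. }
  pose proof (Rabs_le_between0 x xi Hxi_in) as Hxi_le.
  assert (Hh : Rabs (h x) < e * x ^ 2).
  { replace (h x) with (h x - h 0) by (unfold h; rewrite Hf0; ring).
    rewrite Hxi, Rminus_0_r, <- (Rabs_right (x ^ 2)), <- RPow_abs by lra.
    destruct (Req_dec xi 0) as [-> | Hxi0].
    - rewrite Hf'0, Rmult_0_r, Rminus_0_r, Rabs_R0, Rmult_0_l.
      apply Rmult_lt_0_compat; [exact He | apply pow_lt, Rabs_pos_lt, Hx0].
    - assert (Hxi_d : Rabs (xi - 0) < d) by (rewrite Rminus_0_r; lra).
      specialize (HL' xi (conj Hxi0 Hxi_d)).
      change (Rabs (Derive f xi / xi - c) < e) in HL'.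
      replace (Derive f xi - c * xi) with ((Derive f xi / xi - c) * xi) by (field; exact Hxi0).
      rewrite Rabs_mult. pose proof (Rabs_pos xi). pose proof (Rabs_pos_lt x Hx0).
      pose proof (Rabs_pos (Derive f xi / xi - c)).
      apply Rle_lt_trans with (Rabs (Derive f xi / xi - c) * Rabs x * Rabs x).
      + apply Rmult_le_compat_r; [lra |]. apply Rmult_le_compat_l; lra.
      + replace (e * Rabs x ^ 2) with (e * Rabs x * Rabs x) by ring.
        apply Rmult_lt_compat_r; [lra |]. apply Rmult_lt_compat_r; lra. }
  replace (f x / x ^ 2 - c / 2) with (h x / x ^ 2) by (unfold h; field; exact Hx0).
  unfold Rdiv. rewrite Rabs_mult, Rabs_inv, (Rabs_right (x ^ 2)) by lra.
  apply (Rmult_lt_reg_r (x ^ 2)); [exact Hx2 |].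
  rewrite Rmult_assoc, Rinv_l by lra. lra.
Qed.

Lemma Rabs_between a b c rho : Rabs a < rho -> Rabs b < rho ->
  Rmin a b <= c <= Rmax a b -> Rabs c < rho.
Proof.
  intros Ha Hb Hc. apply Rabs_def2 in Ha. apply Rabs_def2 in Hb.
  unfold Rmin, Rmax in Hc. apply Rabs_def1; destruct (Rle_dec a b); lra.
Qed.

Lemma Rabs_R0_lt x rho : Rabs x < rho -> Rabs 0 < rho.
Proof. intros Hx. pose proof (Rabs_pos x). rewrite Rabs_R0. lra. Qed.

Lemma Rabs_nonzero_near x rho : Rabs x < rho -> x <> 0 ->
  exists d, 0 < d /\ forall y, Rabs (y - x) < d -> Rabs y < rho /\ y <> 0.
Proof.
  intros Hx Hx0. exists (Rmin (rho - Rabs x) (Rabs x)).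
  split; [apply Rmin_glb_lt; [lra | apply Rabs_pos_lt, Hx0] |].
  intros y Hy. pose proof (Rmin_l (rho - Rabs x) (Rabs x)).
  pose proof (Rmin_r (rho - Rabs x) (Rabs x)).
  pose proof (Rabs_triang (y - x) x) as Htri. replace (y - x + x) with y in Htri by ring.
  split; [lra | intros ->; rewrite Rminus_0_l, Rabs_Ropp in Hy; lra].
Qed.

Definition pos_second_derivative_on (rho : R) (f : R -> R) : Prop :=
  forall x, Rabs x < rho ->
    derivable_pt_lim f x (Derive f x) /\
    derivable_pt_lim (Derive f) x (Derive_n f 2 x) /\ 0 < Derive_n f 2 x.

Section PosSecondDerivative.
Variables (rho : R) (f : R -> R).
Hypothesis Hf : pos_second_derivative_on rho f.

Lemma pos_second_derivative_on_ex_derive x : Rabs x < rho -> ex_derive f x.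
Proof. intros Hx. exists (Derive f x). apply is_derive_Reals, Hf, Hx. Qed.

Lemma pos_second_derivative_on_ex_derive2 x : Rabs x < rho -> ex_derive (Derive f) x.
Proof. intros Hx. exists (Derive_n f 2 x). apply is_derive_Reals, Hf, Hx. Qed.

Lemma pos_second_derivative_on_le rho' : rho' <= rho -> pos_second_derivative_on rho' f.
Proof. intros Hle x Hx. apply Hf. lra. Qed.

Lemma Derive_increasing a b : Rabs a < rho -> Rabs b < rho -> a < b ->
  Derive f a < Derive f b.
Proof.
  intros Ha Hb Hab.
  assert (Hin : forall c, a <= c <= b -> Rabs c < rho).
  { intros c Hc. apply (Rabs_between a b); [exact Ha | exact Hb |].
    rewrite Rmin_left, Rmax_right; lra. }
  destruct (MVT_cor2 (Derive f) (Derive_n f 2) a b Hab) as [c [Hc Hcab]].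
  - intros c Hc. apply Hf, Hin, Hc.
  - destruct (Hf c (Hin c ltac:(lra))) as [_ [_ Hpos]]. nra.
Qed.

Lemma Derive_neq a b : Rabs a < rho -> Rabs b < rho -> a <> b ->
  Derive f a <> Derive f b.
Proof.
  intros Ha Hb Hab. destruct (Rlt_or_le a b) as [Hlt | Hle].
  - pose proof (Derive_increasing a b Ha Hb Hlt). lra.
  - pose proof (Derive_increasing b a Hb Ha ltac:(lra)). lra.
Qed.

Lemma tangent_below t t' : Rabs t < rho -> Rabs t' < rho -> t <> t' ->
  f t + Derive f t * (t' - t) < f t'.
Proof.
  intros Ht Ht' Htt.
  assert (Hin : forall c, Rmin t t' <= c <= Rmax t t' -> Rabs c < rho)
    by (intros c; apply Rabs_between; assumption).
  destruct (Rlt_or_le t t') as [Hlt | Hle].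
  - rewrite Rmin_left, Rmax_right in Hin by lra.
    destruct (MVT_cor2 f (Derive f) t t' Hlt) as [c [Hc Hcab]].
    + intros c Hc. apply Hf, Hin, Hc.
    + pose proof (Derive_increasing t c Ht (Hin c ltac:(lra)) ltac:(lra)). nra.
  - rewrite Rmin_right, Rmax_left in Hin by lra.
    destruct (MVT_cor2 f (Derive f) t' t ltac:(lra)) as [c [Hc Hcab]].
    + intros c Hc. apply Hf, Hin, Hc.
    + pose proof (Derive_increasing c t (Hin c ltac:(lra)) Ht ltac:(lra)). nra.
Qed.

Hypothesis Hf0 : f 0 = 0.
Hypothesis Hf'0 : Derive f 0 = 0.

Lemma flat_bottom_pos x : Rabs x < rho -> x <> 0 -> 0 < f x.
Proof.
  intros Hx Hx0.
  pose proof (tangent_below 0 x (Rabs_R0_lt x rho Hx) Hx (not_eq_sym Hx0)) as Hbelow.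
  rewrite Hf0, Hf'0 in Hbelow. lra.
Qed.

Lemma flat_bottom_Derive_neq0 x : Rabs x < rho -> x <> 0 -> Derive f x <> 0.
Proof. intros Hx Hx0. rewrite <- Hf'0. exact (Derive_neq x 0 Hx (Rabs_R0_lt x rho Hx) Hx0). Qed.

Lemma flat_bottom_tangent_intercept x : Rabs x < rho -> x <> 0 -> 0 < x * Derive f x - f x.
Proof.
  intros Hx Hx0. pose proof (tangent_below x 0 Hx (Rabs_R0_lt x rho Hx) Hx0) as Hbelow.
  rewrite Hf0 in Hbelow. lra.
Qed.

End PosSecondDerivative.

Lemma C3_on_derivable f r x : C3_on (-r) r f -> -r < x < r ->
  derivable_pt_lim f x (Derive f x).
Proof. intros H Hx. apply is_derive_Reals, Derive_correct, (H x Hx). Qed.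

Lemma C3_on_derivable2 f r x : C3_on (-r) r f -> -r < x < r ->
  derivable_pt_lim (Derive f) x (Derive_n f 2 x).
Proof. intros H Hx. apply is_derive_Reals, (Derive_correct (Derive f)), (H x Hx). Qed.

Lemma C3_on_continuity_D2 f r x : C3_on (-r) r f -> -r < x < r ->
  continuity_pt (Derive_n f 2) x.
Proof.
  intros H Hx. apply derivable_continuous_pt.
  exists (Derive (Derive_n f 2) x). apply is_derive_Reals, Derive_correct, (H x Hx).
Qed.

Lemma pos_second_derivative_on_of_C3 r f : 0 < r -> C3_on (-r) r f -> 0 < Derive_n f 2 0 ->
  exists rho, 0 < rho /\ rho <= r /\ pos_second_derivative_on rho f.
Proof.
  intros Hr Hf H2.
  destruct (C3_on_continuity_D2 f r 0 Hf ltac:(lra) (Derive_n f 2 0 / 2) ltac:(lra))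
    as [d [Hd Hcont]].
  exists (Rmin d r). split; [apply Rmin_glb_lt; lra |]. split; [apply Rmin_r |].
  intros x Hx. pose proof (Rmin_l d r). pose proof (Rmin_r d r).
  apply Rabs_def2 in Hx. assert (Hxr : -r < x < r) by lra.
  split; [exact (C3_on_derivable f r x Hf Hxr) |].
  split; [exact (C3_on_derivable2 f r x Hf Hxr) |].
  destruct (Req_dec x 0) as [-> | Hx0]; [exact H2 |].
  assert (Hdist : Rabs (x - 0) < d) by (rewrite Rminus_0_r; apply Rabs_def1; lra).
  specialize (Hcont x (conj (conj I (not_eq_sym Hx0)) Hdist)).
  change (Rabs (Derive_n f 2 x - Derive_n f 2 0) < Derive_n f 2 0 / 2) in Hcont.
  apply Rabs_def2 in Hcont. lra.
Qed.

Definition tangent_xint (f : R -> R) (t : R) : R := t - f t / Derive f t.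

Definition tangent_meet_y (f : R -> R) (x y : R) : R :=
  f x + ((y - x) * Derive f y - (f y - f x)) / (Derive f y - Derive f x) * Derive f x.

(* For [y <> x] the quotient in [tangent_meet_y f x y] is [(f' y - q y) / ((f' y - f' x) / (y - x))]
   with [q] the difference quotient of [f] at [x] (both sides are [0] when [f' y = f' x]),
   so it tends to [0 / f'' x]. *)
Lemma is_lim_tangent_meet_y rho f x : pos_second_derivative_on rho f -> Rabs x < rho ->
  is_lim (tangent_meet_y f x) x (f x).
Proof.
  intros Hf Hx. destruct (Hf x Hx) as [Hd1 [Hd2 Hpos]].
  pose proof (is_lim_diff_quot f x _ Hd1) as Lf.
  pose proof (is_lim_diff_quot (Derive f) x _ Hd2) as Lf'.
  pose proof (is_lim_continuity _ _ (derivable_continuous_pt _ _ (exist _ _ Hd2))) as Lc.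
  pose proof (is_lim_div _ _ x _ _ (is_lim_minus' _ _ _ _ _ Lc Lf) Lf'
                ltac:(intros E; apply Rbar_finite_eq in E; lra) I) as Lk.
  cbn -[Derive_n] in Lk. rewrite Rminus_eq_0, Rmult_0_l in Lk.
  pose proof (is_lim_plus' _ _ x _ _ (is_lim_const (f x) x) (is_lim_scal_r _ (Derive f x) x _ Lk)) as L.
  cbn -[Derive_n] in L. rewrite Rmult_0_l, Rplus_0_r in L.
  revert L. apply is_lim_ext_loc. exists (mkposreal 1 Rlt_0_1). intros y _ Hyx.
  unfold tangent_meet_y. f_equal. f_equal.
  destruct (Req_dec (Derive f y - Derive f x) 0) as [E | E].
  - rewrite E, Rdiv_0_l. unfold Rdiv. now rewrite !Rinv_0, !Rmult_0_r.
  - field. split; [exact E | lra].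
Qed.

Lemma derivable_pt_lim_tangent_xint rho f x : pos_second_derivative_on rho f -> Rabs x < rho ->
  Derive f x <> 0 ->
  derivable_pt_lim (tangent_xint f) x (f x * Derive_n f 2 x / Derive f x ^ 2).
Proof.
  intros Hf Hx Hf'x. apply is_derive_Reals.
  pose proof (pos_second_derivative_on_ex_derive rho f Hf x Hx).
  pose proof (pos_second_derivative_on_ex_derive2 rho f Hf x Hx).
  unfold tangent_xint. auto_derive.
  - change (fun t => f t) with f. change (fun t => Derive f t) with (Derive f). tauto.
  - change (fun t => f t) with f. change (fun t => Derive f t) with (Derive f).
    change (Derive_n f 2 x) with (Derive (Derive f) x). field. exact Hf'x.
Qed.

Section AreaRelation.
Variables (rho lam : R) (f : R -> R).
Hypothesis Hf : pos_second_derivative_on rho f.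
Hypothesis Hf0 : f 0 = 0.
Hypothesis Hf'0 : Derive f 0 = 0.
Hypothesis Harea : forall x y, Rabs x < rho -> Rabs y < rho -> x <> 0 -> y <> 0 -> x <> y ->
  lam * Rabs (x * f y - f x * y) =
  Rabs (tangent_meet_y f x y) * Rabs (tangent_xint f y - tangent_xint f x).

(* Divide the relation by [y - x] and let [y] tend to [x]. *)
Lemma area_relation_ode x : Rabs x < rho -> x <> 0 ->
  lam * (x * Derive f x - f x) * Derive f x ^ 2 = f x ^ 2 * Derive_n f 2 x.
Proof.
  intros Hx Hx0.
  pose proof (flat_bottom_pos rho f Hf Hf0 Hf'0 x Hx Hx0) as Hfx.
  pose proof (flat_bottom_Derive_neq0 rho f Hf Hf'0 x Hx Hx0) as Hf'x.
  pose proof (flat_bottom_tangent_intercept rho f Hf Hf0 x Hx Hx0) as Hint.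
  destruct (Hf x Hx) as [_ [_ Hf''x]].
  destruct (Rabs_nonzero_near x rho Hx Hx0) as [d [Hd Hnear]].
  assert (DPhi : derivable_pt_lim (fun y => x * f y - f x * y) x (x * Derive f x - f x)).
  { apply is_derive_Reals. pose proof (pos_second_derivative_on_ex_derive rho f Hf x Hx) as Hex.
    auto_derive; [exact Hex | change (fun t => f t) with f; ring]. }
  assert (L1 : is_lim (fun y => lam * Rabs ((x * f y - f x * y - (x * f x - f x * x)) / (y - x)))
                 x (lam * Rabs (x * Derive f x - f x)))
    by exact (is_lim_scal_l _ lam x _ (is_lim_Rabs _ x _ (is_lim_diff_quot _ x _ DPhi))).
  assert (L2 : is_lim (fun y => Rabs (tangent_meet_y f x y) *
                                Rabs ((tangent_xint f y - tangent_xint f x) / (y - x)))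
                 x (Rabs (f x) * Rabs (f x * Derive_n f 2 x / Derive f x ^ 2))).
  { exact (is_lim_mult _ _ x _ _
      (is_lim_Rabs _ x _ (is_lim_tangent_meet_y rho f x Hf Hx))
      (is_lim_Rabs _ x _ (is_lim_diff_quot _ x _ (derivable_pt_lim_tangent_xint rho f x Hf Hx Hf'x)))
      I). }
  assert (Hloc : forall y, y <> x -> Rabs (y - x) < d ->
    lam * Rabs ((x * f y - f x * y - (x * f x - f x * x)) / (y - x)) =
    Rabs (tangent_meet_y f x y) * Rabs ((tangent_xint f y - tangent_xint f x) / (y - x))).
  { intros y Hyx Hy. destruct (Hnear y Hy) as [Hy1 Hy0].
    replace (x * f y - f x * y - (x * f x - f x * x)) with (x * f y - f x * y) by ring.
    unfold Rdiv. rewrite !Rabs_mult, <- Rmult_assoc, (Harea x y Hx Hy1 Hx0 Hy0 (not_eq_sym Hyx)).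
    ring. }
  pose proof (is_lim_eq_loc _ _ x _ _ d Hd Hloc L1 L2) as E.
  assert (Hg' : 0 < f x * Derive_n f 2 x / Derive f x ^ 2)
    by (apply Rdiv_lt_0_compat; [apply Rmult_lt_0_compat; assumption | apply pow2_gt_0, Hf'x]).
  rewrite (Rabs_right (x * Derive f x - f x)), (Rabs_right (f x)),
    (Rabs_right (f x * Derive_n f 2 x / Derive f x ^ 2)) in E by lra.
  rewrite E. field. exact Hf'x.
Qed.

End AreaRelation.

(* Divide the differential equation by [x^4] and let [x] tend to [0]. *)
Lemma lambda_half rho lam f : 0 < rho -> pos_second_derivative_on rho f ->
  continuity_pt (Derive_n f 2) 0 -> f 0 = 0 -> Derive f 0 = 0 ->
  (forall x, Rabs x < rho -> x <> 0 ->
     lam * (x * Derive f x - f x) * Derive f x ^ 2 = f x ^ 2 * Derive_n f 2 x) ->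
  lam = 1 / 2.
Proof.
  intros Hrho Hf Hc2 Hf0 Hf'0 Hode.
  assert (H0 : Rabs 0 < rho) by (rewrite Rabs_R0; exact Hrho).
  set (c := Derive_n f 2 0).
  assert (Hc : 0 < c) by apply (Hf 0 H0).
  assert (LA : is_lim (fun x => Derive f x / x) 0 c).
  { apply (is_lim_ext_loc (fun y => (Derive f y - Derive f 0) / (y - 0))).
    - exists (mkposreal 1 Rlt_0_1). intros y _ _. rewrite Hf'0. f_equal; ring.
    - apply is_lim_diff_quot, Hf, H0. }
  pose proof (is_lim_div_sqr f rho c Hrho Hf0 Hf'0 ltac:(apply Hf) LA) as LB.
  pose proof (is_lim_continuity _ _ Hc2) as LC.
  assert (L1 : is_lim (fun x => lam * (Derive f x / x - f x / x ^ 2) * (Derive f x / x * (Derive f x / x)))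
                 0 (lam * (c - c / 2) * (c * c))).
  { exact (is_lim_mult _ _ _ _ _ (is_lim_scal_l _ lam _ _ (is_lim_minus' _ _ _ _ _ LA LB))
                                   (is_lim_mult _ _ _ _ _ LA LA I) I). }
  assert (L2 : is_lim (fun x => f x / x ^ 2 * (f x / x ^ 2) * Derive_n f 2 x) 0 (c / 2 * (c / 2) * c)).
  { exact (is_lim_mult _ _ _ _ _ (is_lim_mult _ _ _ _ _ LB LB I) LC I). }
  assert (Hloc : forall y, y <> 0 -> Rabs (y - 0) < rho ->
    lam * (Derive f y / y - f y / y ^ 2) * (Derive f y / y * (Derive f y / y)) =
    f y / y ^ 2 * (f y / y ^ 2) * Derive_n f 2 y).
  { intros y Hy Hy'. rewrite Rminus_0_r in Hy'.
    apply (Rmult_eq_reg_r (y ^ 4)); [| apply pow_nonzero, Hy].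
    transitivity (lam * (y * Derive f y - f y) * Derive f y ^ 2); [field; exact Hy |].
    rewrite (Hode y Hy' Hy). field. exact Hy. }
  pose proof (is_lim_eq_loc _ _ 0 _ _ rho Hrho Hloc L1 L2) as E.
  apply (Rmult_eq_reg_r (c * c * c)); [| apply Rgt_not_eq; repeat apply Rmult_lt_0_compat; exact Hc].
  replace (1 / 2 * (c * c * c)) with (2 * (c / 2 * (c / 2) * c)) by field.
  rewrite <- E. field.
Qed.

Definition coord_vec (th e : R) (v : pt) : pt :=
  (cos th * fst v + sin th * snd v, e * (- sin th * fst v + cos th * snd v)).

Lemma psub_coord A th e p q :
  psub (coord A th e p) (coord A th e q) = coord_vec th e (psub p q).
Proof. unfold psub, coord, coord_vec; simpl. f_equal; ring. Qed.

Lemma det_coord_vec th e v w : det (coord_vec th e v) (coord_vec th e w) = e * det v w.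
Proof.
  unfold det, coord_vec; simpl.
  transitivity (e * (fst v * snd w - snd v * fst w) * ((sin th)² + (cos th)²)).
  - unfold Rsqr; ring.
  - rewrite sin2_cos2; ring.
Qed.

Lemma norm_coord_vec th e v : e * e = 1 ->
  fst (coord_vec th e v) ^ 2 + snd (coord_vec th e v) ^ 2 = fst v ^ 2 + snd v ^ 2.
Proof.
  intros He. unfold coord_vec; simpl.
  transitivity ((fst v ^ 2 + snd v ^ 2) * ((sin th)² + (cos th)²) +
     (e * e - 1) * (- sin th * fst v + cos th * snd v) ^ 2).
  - unfold Rsqr; ring.
  - rewrite sin2_cos2, He; ring.
Qed.

(* Also valid when [b = 0], since then both sides are [0]. *)
Lemma Rdiv_mult_cancel_l k a b : k <> 0 -> (k * a) / (k * b) = a / b.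
Proof.
  intros Hk. destruct (Req_dec b 0) as [-> | Hb].
  - rewrite Rmult_0_r. unfold Rdiv. rewrite Rinv_0. ring.
  - field; auto.
Qed.

Lemma tri_area_coord A th e P Q S : e * e = 1 ->
  tri_area (coord A th e P) (coord A th e Q) (coord A th e S) = tri_area P Q S.
Proof.
  intros He. unfold tri_area. rewrite !psub_coord, det_coord_vec, Rabs_mult.
  assert (Habs : Rabs e = 1)
    by (destruct (Rle_dec 0 e); [rewrite Rabs_right | rewrite Rabs_left]; nra).
  rewrite Habs. lra.
Qed.

Lemma line_inter_coord A th e P u Q v : e * e = 1 ->
  line_inter (coord A th e P) (coord_vec th e u) (coord A th e Q) (coord_vec th e v) =
  coord A th e (line_inter P u Q v).
Proof.
  intros He. unfold line_inter. rewrite psub_coord, !det_coord_vec, Rdiv_mult_cancel_l by nra.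
  set (k := det (psub Q P) v / det u v).
  unfold padd, pscal, coord, coord_vec; simpl. f_equal; ring.
Qed.

Lemma line_inter_scale P u Q v c c' : c <> 0 -> c' <> 0 ->
  line_inter P (pscal c u) Q (pscal c' v) = line_inter P u Q v.
Proof.
  intros Hc Hc'. unfold line_inter.
  replace (det (psub Q P) (pscal c' v)) with (c' * det (psub Q P) v)
    by (unfold det, pscal; simpl; ring).
  replace (det (pscal c u) (pscal c' v)) with (c' * (c * det u v))
    by (unfold det, pscal; simpl; ring).
  rewrite Rdiv_mult_cancel_l by exact Hc'.
  destruct (Req_dec (det u v) 0) as [Hd | Hd].
  - rewrite Hd, Rmult_0_r. unfold Rdiv. rewrite !Rinv_0, !Rmult_0_r.
    unfold padd, pscal; simpl. f_equal; ring.
  - unfold padd, pscal; simpl. f_equal; field; auto.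
Qed.

Lemma tri_area_origin x fx y fy : tri_area (0, 0) (x, fx) (y, fy) = Rabs (x * fy - fx * y) / 2.
Proof. unfold tri_area, det, psub; simpl. f_equal. f_equal. ring. Qed.

Lemma tangent_triangle_area f x y : Derive f x <> 0 -> Derive f y <> 0 -> Derive f x <> Derive f y ->
  tri_area (line_inter (x, f x) (1, Derive f x) (y, f y) (1, Derive f y))
           (line_inter (0, 0) (1, 0) (x, f x) (1, Derive f x))
           (line_inter (0, 0) (1, 0) (y, f y) (1, Derive f y)) =
  Rabs (tangent_meet_y f x y * (tangent_xint f y - tangent_xint f x)) / 2.
Proof.
  intros Ha Hb Hab. unfold tri_area, tangent_meet_y, tangent_xint. f_equal. f_equal.
  unfold det, line_inter, padd, pscal, psub; simpl. unfold det; simpl. field.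
  repeat split; try assumption; intro E; apply Hab; lra.
Qed.

Lemma derivable_pt_lim_min (g : R -> R) a b t l : a < t < b -> derivable_pt_lim g t l ->
  (forall z, a < z < b -> g t <= g z) -> l = 0.
Proof.
  intros Ht Hd Hmin.
  exact (deriv_minimum g a b t (exist _ l Hd) (proj1 Ht) (proj2 Ht)
           (fun z Hz1 Hz2 => Hmin z (conj Hz1 Hz2))).
Qed.

Section AdaptedFrame.
Variables (X : R -> pt) (s0 theta eps sigma rho : R) (f : R -> R).
Hypothesis Heps : eps = 1 \/ eps = -1.
Hypothesis Hsigma : sigma = 1 \/ sigma = -1.
Hypothesis Hside : forall s u, 0 <= sigma * det (dX X s) (psub (X u) (X s)).
Hypothesis Harc : arclength_param X.
Hypothesis HC : C3_curve X.
Hypothesis Hrho : 0 < rho.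
Hypothesis Hgraph : forall t, Rabs t < rho -> exists s, coord (X s0) theta eps (X s) = (t, f t).
Hypothesis Hf : pos_second_derivative_on rho f.
Hypothesis Hf0 : f 0 = 0.

Local Notation Y u := (coord (X s0) theta eps (X u)).
Local Notation D u := (coord_vec theta eps (dX X u)).
Local Notation sp := (sigma * eps).

Lemma frame_sign : sp = 1 \/ sp = -1.
Proof. destruct Heps, Hsigma; subst; [left | right | right | left]; ring. Qed.

Lemma frame_eps_sqr : eps * eps = 1.
Proof. destruct Heps; subst; ring. Qed.

Lemma frame_support s u : 0 <= sp * det (D s) (psub (Y u) (Y s)).
Proof.
  rewrite psub_coord, det_coord_vec.
  replace (sp * (eps * det (dX X s) (psub (X u) (X s)))) with
    (sigma * det (dX X s) (psub (X u) (X s)) * (eps * eps)) by ring.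
  rewrite frame_eps_sqr, Rmult_1_r. apply Hside.
Qed.

Lemma frame_origin : Y s0 = (0, 0).
Proof. unfold coord. f_equal; ring. Qed.

(* By the support property [z |-> sp * det (D s) ((z, f z) - Y s)] is minimal at [t]. *)
Lemma frame_tangent s t : Rabs t < rho -> Y s = (t, f t) ->
  exists c, 0 < sp * c /\ D s = pscal c (1, Derive f t).
Proof.
  intros Ht HYs. destruct (D s) as [c d] eqn:ED.
  assert (Hmin : forall t', Rabs t' < rho -> sp * (c * f t - d * t) <= sp * (c * f t' - d * t')).
  { intros t' Ht'. destruct (Hgraph t' Ht') as [s' Hs'].
    pose proof (frame_support s s') as Hq. rewrite ED, Hs', HYs in Hq.
    unfold det, psub in Hq; simpl in Hq. nra. }
  assert (Hd : d = c * Derive f t).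
  { assert (Hl : derivable_pt_lim (fun z => sp * (c * f z - d * z)) t (sp * (c * Derive f t - d))).
    { apply is_derive_Reals. pose proof (pos_second_derivative_on_ex_derive rho f Hf t Ht).
      auto_derive; [assumption | change (fun x => f x) with f; ring]. }
    apply Rabs_def2 in Ht.
    pose proof (derivable_pt_lim_min _ (-rho) rho t _ ltac:(lra) Hl
                  (fun z Hz => Hmin z ltac:(apply Rabs_def1; lra))) as H0.
    destruct frame_sign as [E | E]; rewrite E in H0; lra. }
  subst d.
  assert (Hc : c <> 0).
  { intros ->. pose proof (Harc s) as Hn. unfold arclength_param in Hn.
    rewrite <- (norm_coord_vec theta eps _ frame_eps_sqr), ED in Hn. simpl in Hn. lra. }
  set (t' := (t + rho) / 2).
  assert (Ht' : Rabs t' < rho) by (unfold t'; apply Rabs_def2 in Ht; apply Rabs_def1; lra).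
  assert (Htt : t <> t') by (unfold t'; apply Rabs_def2 in Ht; lra).
  pose proof (tangent_below rho f Hf t t' Ht Ht' Htt) as Hbelow.
  pose proof (Hmin t' Ht') as Hmin'.
  exists c. split.
  - assert (0 <= sp * c * (f t' - (f t + Derive f t * (t' - t)))) by nra.
    assert (0 <= sp * c) by nra.
    destruct frame_sign as [E | E]; rewrite E in *; lra.
  - unfold pscal; simpl. f_equal; ring.
Qed.

(* The support property at the point and at the graph point with the same abscissa bounds
   its height from both sides. *)
Lemma frame_on_graph u : 0 < sp * fst (D u) -> Rabs (fst (Y u)) < rho ->
  Y u = (fst (Y u), f (fst (Y u))).
Proof.
  intros Hspeed Hp. destruct (Hgraph _ Hp) as [st Hst].
  destruct (frame_tangent st _ Hp Hst) as [c [Hc HDc]].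
  pose proof (frame_support st u) as Q1. pose proof (frame_support u st) as Q2.
  rewrite HDc, Hst in Q1. rewrite Hst in Q2.
  destruct (Y u) as [p q]. destruct (D u) as [a b]. simpl in *.
  unfold det, psub, pscal in Q1, Q2; simpl in Q1, Q2.
  f_equal.
  assert (0 <= q - f p) by (apply (Rmult_le_reg_l (sp * c)); nra).
  assert (0 <= f p - q) by (apply (Rmult_le_reg_l (sp * a)); nra).
  lra.
Qed.

Lemma frame_abscissa_derivable u : derivable_pt_lim (fun v => fst (Y v)) u (fst (D u)).
Proof.
  destruct HC as [HC1 HC2].
  set (X1 := fun v => fst (X v)). set (X2 := fun v => snd (X v)).
  pose proof (proj1 (HC1 u) : ex_derive X1 u). pose proof (proj1 (HC2 u) : ex_derive X2 u).
  apply is_derive_Reals.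
  change (is_derive (fun v => cos theta * (X1 v - X1 s0) + sin theta * (X2 v - X2 s0)) u
            (cos theta * Derive X1 u + sin theta * Derive X2 u)).
  auto_derive; [tauto |]. change (fun x => X1 x) with X1. change (fun x => X2 x) with X2. ring.
Qed.

Lemma frame_speed_continuous : continuity_pt (fun v => fst (D v)) s0.
Proof.
  destruct HC as [HC1 HC2]. unfold coord_vec, dX; simpl.
  apply continuity_pt_plus; apply continuity_pt_mult;
    try (apply continuity_pt_const; intros ? ?; reflexivity);
    apply derivable_continuous_pt.
  - exists (Derive (Derive (fun u => fst (X u))) s0).
    apply is_derive_Reals, Derive_correct, (HC1 s0).
  - exists (Derive (Derive (fun u => snd (X u))) s0).
    apply is_derive_Reals, Derive_correct, (HC2 s0).
Qed.

Lemma frame_tangent_origin : exists c0, 0 < sp * c0 /\ D s0 = pscal c0 (1, Derive f 0).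
Proof.
  apply frame_tangent; [rewrite Rabs_R0; exact Hrho | rewrite frame_origin, Hf0; reflexivity].
Qed.

Lemma frame_speed_pos_near : exists eta, 0 < eta /\
  forall v, Rabs (v - s0) < eta -> 0 < sp * fst (D v).
Proof.
  destruct frame_tangent_origin as [c0 [Hc0 HD0]].
  assert (Hspeed0 : 0 < sp * fst (D s0)) by (rewrite HD0; simpl; lra).
  destruct (frame_speed_continuous _ Hspeed0) as [eta [Heta Hcont]].
  exists eta. split; [exact Heta |].
  intros v Hv. destruct (Req_dec v s0) as [-> | Hne]; [exact Hspeed0 |].
  specialize (Hcont v (conj (conj I (not_eq_sym Hne)) Hv)).
  change (Rabs (fst (D v) - fst (D s0)) < sp * fst (D s0)) in Hcont.
  apply Rabs_def2 in Hcont. destruct frame_sign as [E | E]; rewrite E in *; lra.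
Qed.

Lemma frame_abscissa_sign h : 0 < h -> (forall v, Rabs (v - s0) <= h -> 0 < sp * fst (D v)) ->
  0 < sp * fst (Y (s0 + h)) /\ sp * fst (Y (s0 - h)) < 0.
Proof.
  intros Hh Hspeed.
  assert (Hp0 : fst (Y s0) = 0) by (rewrite frame_origin; reflexivity).
  split.
  - destruct (MVT_cor2 (fun v => fst (Y v)) (fun v => fst (D v)) s0 (s0 + h) ltac:(lra)
                (fun c _ => frame_abscissa_derivable c)) as [c [Hc Hcin]].
    pose proof (Hspeed c ltac:(apply Rabs_le; lra)).
    rewrite Hp0 in Hc. replace (fst (Y (s0 + h))) with (fst (D c) * h) by lra. nra.
  - destruct (MVT_cor2 (fun v => fst (Y v)) (fun v => fst (D v)) (s0 - h) s0 ltac:(lra)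
                (fun c _ => frame_abscissa_derivable c)) as [c [Hc Hcin]].
    pose proof (Hspeed c ltac:(apply Rabs_le; lra)).
    rewrite Hp0 in Hc. replace (fst (Y (s0 - h))) with (- (fst (D c) * h)) by lra. nra.
Qed.

(* The abscissa of [Y] is [0] at [s0] and strictly monotone near [s0]; by the intermediate value
   theorem it covers a neighbourhood of [0], and the points found there lie on the graph. *)
Lemma frame_graph_param delta : 0 < delta -> exists rho', 0 < rho' /\ rho' <= rho /\
  forall x, Rabs x < rho' -> exists h, Rabs h < delta /\ Y (s0 + h) = (x, f x).
Proof.
  intros Hdelta. set (p := fun v => fst (Y v)).
  destruct frame_speed_pos_near as [eta [Heta Hspeed]].
  set (h0 := Rmin eta delta / 2).
  assert (Hh0 : 0 < h0 /\ h0 < eta /\ h0 < delta).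
  { pose proof (Rmin_l eta delta). pose proof (Rmin_r eta delta).
    pose proof (Rmin_glb_lt eta delta 0 Heta Hdelta). unfold h0. lra. }
  destruct (frame_abscissa_sign h0 ltac:(lra) ltac:(intros v Hv; apply Hspeed; lra))
    as [Hright Hleft]. fold (p (s0 + h0)) (p (s0 - h0)) in Hright, Hleft.
  set (m := Rmin (Rabs (p (s0 - h0))) (Rabs (p (s0 + h0)))).
  exists (Rmin rho m). split; [| split; [apply Rmin_l |]].
  { apply Rmin_glb_lt; [exact Hrho |].
    apply Rmin_glb_lt; apply Rabs_pos_lt; intros E; rewrite E in *; lra. }
  intros x Hx.
  assert (Hx_rho : Rabs x < rho) by (pose proof (Rmin_l rho m); lra).
  assert (Hx_m : Rabs x < Rabs (p (s0 - h0)) /\ Rabs x < Rabs (p (s0 + h0))).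
  { pose proof (Rmin_r rho m) as Hm.
    assert (Hml : m <= Rabs (p (s0 - h0))) by apply Rmin_l.
    assert (Hmr : m <= Rabs (p (s0 + h0))) by apply Rmin_r. lra. }
  assert (Hcont_p : continuity p) by (intros v; apply derivable_continuous_pt;
    exists (fst (D v)); apply frame_abscissa_derivable).
  destruct (IVT_gen p (s0 - h0) (s0 + h0) x Hcont_p) as [u [Hu Hpu]].
  { apply Rabs_def2 in Hx_rho. destruct Hx_m as [Hxl Hxr]. unfold Rmin, Rmax.
    destruct frame_sign as [E | E]; rewrite E in Hleft, Hright;
      [rewrite (Rabs_left (p (s0 - h0))), (Rabs_right (p (s0 + h0))) in * by lra
      | rewrite (Rabs_right (p (s0 - h0))), (Rabs_left (p (s0 + h0))) in * by lra];
      apply Rabs_def2 in Hxl; apply Rabs_def2 in Hxr;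
      destruct (Rle_dec _ _); lra. }
  rewrite Rmin_left, Rmax_right in Hu by lra.
  exists (u - s0). split; [apply Rabs_def1; lra |].
  replace (s0 + (u - s0)) with u by ring.
  unfold p in Hpu. rewrite (frame_on_graph u), Hpu; [reflexivity | |].
  - apply Hspeed, Rabs_def1; lra.
  - rewrite Hpu. exact Hx_rho.
Qed.

Hypothesis Hf'0 : Derive f 0 = 0.

Lemma frame_Tarea h1 h2 x y : Y (s0 + h1) = (x, f x) -> Y (s0 + h2) = (y, f y) ->
  Tarea X s0 h1 h2 = Rabs (x * f y - f x * y) / 2.
Proof.
  intros H1 H2. unfold Tarea.
  rewrite <- (tri_area_coord (X s0) theta eps _ _ _ frame_eps_sqr), frame_origin, H1, H2.
  apply tri_area_origin.
Qed.

Lemma frame_Uarea h1 h2 x y : Rabs x < rho -> Rabs y < rho -> x <> 0 -> y <> 0 -> x <> y ->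
  Y (s0 + h1) = (x, f x) -> Y (s0 + h2) = (y, f y) ->
  Uarea X s0 h1 h2 = Rabs (tangent_meet_y f x y * (tangent_xint f y - tangent_xint f x)) / 2.
Proof.
  intros Hx Hy Hx0 Hy0 Hxy H1 H2.
  destruct frame_tangent_origin as [c0 [Hc0 HD0]].
  destruct (frame_tangent _ x Hx H1) as [cx [Hcx HDx]].
  destruct (frame_tangent _ y Hy H2) as [cy [Hcy HDy]].
  assert (Hnz : forall c, 0 < sp * c -> c <> 0) by (intros c Hc E; rewrite E, Rmult_0_r in Hc; lra).
  unfold Uarea; cbv zeta.
  rewrite <- (tri_area_coord (X s0) theta eps _ _ _ frame_eps_sqr),
    <- !(line_inter_coord _ _ _ _ _ _ _ frame_eps_sqr).
  rewrite frame_origin, H1, H2, HD0, HDx, HDy, Hf'0, !line_inter_scale by auto.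
  apply tangent_triangle_area.
  - exact (flat_bottom_Derive_neq0 rho f Hf Hf'0 x Hx Hx0).
  - exact (flat_bottom_Derive_neq0 rho f Hf Hf'0 y Hy Hy0).
  - exact (Derive_neq rho f Hf x y Hx Hy Hxy).
Qed.

Lemma frame_area_relation lam delta : 0 < delta ->
  (forall h1 h2, Rabs h1 < delta -> Rabs h2 < delta ->
     X s0 <> X (s0 + h1) -> X s0 <> X (s0 + h2) -> X (s0 + h1) <> X (s0 + h2) ->
     Uarea X s0 h1 h2 = lam * Tarea X s0 h1 h2) ->
  exists rho', 0 < rho' /\ rho' <= rho /\
    forall x y, Rabs x < rho' -> Rabs y < rho' -> x <> 0 -> y <> 0 -> x <> y ->
      lam * Rabs (x * f y - f x * y) =
      Rabs (tangent_meet_y f x y) * Rabs (tangent_xint f y - tangent_xint f x).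
Proof.
  intros Hdelta HUT.
  destruct (frame_graph_param delta Hdelta) as [rho' [Hrho' [Hle Hparam]]].
  exists rho'. split; [exact Hrho' | split; [exact Hle |]].
  intros x y Hx Hy Hx0 Hy0 Hxy.
  destruct (Hparam x Hx) as [h1 [Hh1 HY1]]. destruct (Hparam y Hy) as [h2 [Hh2 HY2]].
  assert (Hneq : forall a b, fst (Y a) <> fst (Y b) -> X a <> X b)
    by (intros a b Hab E; apply Hab; rewrite E; reflexivity).
  pose proof (HUT h1 h2 Hh1 Hh2
    (Hneq _ _ ltac:(rewrite frame_origin, HY1; simpl; auto))
    (Hneq _ _ ltac:(rewrite frame_origin, HY2; simpl; auto))
    (Hneq _ _ ltac:(rewrite HY1, HY2; simpl; auto))) as HU.
  rewrite (frame_Tarea h1 h2 x y HY1 HY2),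
    (frame_Uarea h1 h2 x y ltac:(lra) ltac:(lra) Hx0 Hy0 Hxy HY1 HY2), Rabs_mult in HU.
  lra.
Qed.

End AdaptedFrame.

Theorem lemma7 (X : R -> pt) (lambda : R -> R)
  (HX : strictly_convex_curve X) (Harc : arclength_param X)
  (HUT : forall s, exists delta, 0 < delta /\
     forall h1 h2, Rabs h1 < delta -> Rabs h2 < delta ->
       X s <> X (s + h1) -> X s <> X (s + h2) -> X (s + h1) <> X (s + h2) ->
       Uarea X s h1 h2 = lambda s * Tarea X s h1 h2)
  (s0 theta eps : R) (Heps : eps = 1 \/ eps = -1)
  (Htan : snd (coord (0, 0) theta eps (dX X s0)) = 0)
  (f : R -> R) (r : R) (Hr : 0 < r)
  (Hgraph : forall t, -r < t < r ->
     exists s, coord (X s0) theta eps (X s) = (t, f t))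
  (Hf3 : C3_on (-r) r f) (Hfconv : strictly_convex_fun_on (-r) r f)
  (Hfnn : forall t, -r < t < r -> 0 <= f t)
  (Hf0 : f 0 = 0) (Hf'0 : Derive f 0 = 0) (Hf''0 : 0 < Derive_n f 2 0) :
  exists eps0, 0 < eps0 /\ forall t, Rabs t < eps0 ->
    2 * (f t) ^ 2 * Derive_n f 2 t =
    (Derive f t) ^ 2 * (t * Derive f t - f t).
Proof.
  destruct HX as [HC [_ [sigma [Hsigma [_ Hside]]]]].
  destruct (pos_second_derivative_on_of_C3 r f Hr Hf3 Hf''0) as [rho [Hrho [Hrhor Hf]]].
  assert (Hgraph' : forall t, Rabs t < rho -> exists s, coord (X s0) theta eps (X s) = (t, f t))
    by (intros t Ht; apply Hgraph; apply Rabs_def2 in Ht; lra).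
  destruct (HUT s0) as [delta [Hdelta HUTs0]].
  destruct (frame_area_relation X s0 theta eps sigma rho f Heps Hsigma Hside Harc HC Hrho
              Hgraph' Hf Hf0 Hf'0 (lambda s0) delta Hdelta HUTs0) as [rho' [Hrho' [Hle Harea]]].
  pose proof (pos_second_derivative_on_le rho f Hf rho' Hle) as Hf'.
  pose proof (area_relation_ode rho' (lambda s0) f Hf' Hf0 Hf'0 Harea) as Hode.
  pose proof (lambda_half rho' (lambda s0) f Hrho' Hf'
                (C3_on_continuity_D2 f r 0 Hf3 ltac:(lra)) Hf0 Hf'0 Hode) as Hlam.
  exists rho'. split; [exact Hrho' |]. intros t Ht.
  destruct (Req_dec t 0) as [-> | Ht0]; [rewrite Hf0, Hf'0; ring |].
  pose proof (Hode t Ht Ht0) as E. rewrite Hlam in E. lra.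
Qed.
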